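(* Let $d=1$. For $x\in\mathbb{R}$, $$\#\Phi(x)=\begin{cases}\aleph_0 & \text{if } x\in\mathbb{Q},\\ 2^{\aleph_0} & \text{if } x\in\mathrm{WA}\setminus\mathbb{Q},\\ 0 & \text{if } x\in\mathrm{Bad}.\end{cases}$$
   Context: For $t\in\mathbb{R}$, $\|t\|$ is the distance from $t$ to $\mathbb{Z}$. Write $\mathbb{N}=\{1,2,\dots\}$. $\mathrm{Bad}=\{x\in\mathbb{R}:\inf_{n\in\mathbb{N}}n\|nx\|>0\}$ and $\mathrm{WA}=\mathbb{R}\setminus\mathrm{Bad}$. $\mathcal{D}$ is the set of all non-increasing $\psi:\mathbb{N}\to\mathbb{R}_{\ge0}$ with $\sum_n\psi(n)=\infty$. $W(\psi)$ is the set of $(x,y)\in\mathbb{R}^2$ with $\|nx+y\|<\psi(n)$ for infinitely many $n\in\mathbb{N}$. $\Pi=\bigcap_{\psi\in\mathcal{D}}W(\psi)$ and $\Phi(x)=\{y\in\mathbb{R}:(x,y)\in\Pi\}$. *)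

From Stdlib Require Import Reals Lra Lia.
Open Scope R_scope.

(* ||t|| : distance from t to the nearest integer.
   With fl = floor t (= Int_part t), the nearest integers are fl and fl+1. *)
Definition dist_Z (t : R) : R :=
  Rmin (t - IZR (Int_part t)) (IZR (Int_part t) + 1 - t).

Definition Bad (x : R) : Prop :=
  exists c : R, c > 0 /\ forall n : nat, (1 <= n)%nat -> INR n * dist_Z (INR n * x) >= c.

Definition WA (x : R) : Prop := ~ Bad x.

Definition rational (x : R) : Prop :=
  exists p q : Z, q <> 0%Z /\ x = IZR p / IZR q.

Fixpoint psum (psi : nat -> R) (N : nat) : R :=
  match N with
  | O => 0
  | S k => psum psi k + psi (S k)
  end.

(* The class D : psi defined on N = {1,2,...} (values at 0 are irrelevant),
   non-negative, non-increasing, with divergent sum. *)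
Definition in_D (psi : nat -> R) : Prop :=
  (forall n : nat, (1 <= n)%nat -> 0 <= psi n) /\
  (forall m n : nat, (1 <= m)%nat -> (m <= n)%nat -> psi n <= psi m) /\
  (forall M : R, exists N : nat, psum psi N > M).

Definition W (psi : nat -> R) (x y : R) : Prop :=
  forall N : nat, exists n : nat, (N < n)%nat /\ (1 <= n)%nat /\
    dist_Z (INR n * x + y) < psi n.

Definition Pi (x y : R) : Prop := forall psi : nat -> R, in_D psi -> W psi x y.

Definition Phi (x : R) : R -> Prop := fun y => Pi x y.

Definition countably_infinite (S : R -> Prop) : Prop :=
  exists f : nat -> R, (forall m n, f m = f n -> m = n) /\
                       (forall y, S y <-> exists n, f n = y).

Definition has_card_continuum (S : R -> Prop) : Prop :=
  exists f : R -> R, (forall a b, f a = f b -> a = b) /\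
                     (forall y, S y <-> exists a, f a = y).

Definition is_empty (S : R -> Prop) : Prop := forall y, ~ S y.

(* For rational x = p/q the distances ||n x + y|| are q-periodic in n, so
   y lies in Phi(x) iff n x + y is an integer for some n >= 1, i.e. iff
   y is in (gcd(p, q)/q) Z.  To exclude y from Phi(x) one uses for psi the
   running minimum of ||n x + y||: it lies below the distances, and its sum
   diverges when the distances are periodic and nonzero, and also when x is
   badly approximable, since two small values ||u x + y||, ||v x + y|| would
   make (v - u) ||(v - u) x|| small.
   For irrational x not in Bad choose q_j with q_j ||q_j x|| < 2^-j and
   ||q_(j+1) x|| <= ||q_j x|| / 8, let delta_j be the signed error of q_j x,
   and for digits b_j in {1, 2} put y_b = - sum_j b_j delta_j.  Along
   m_j = sum_(i <= j) b_i q_i the distance ||m_j x + y_b|| is at most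
   3 ||q_(j+1) x||, so a psi in D beating y_b would have bounded sum; the
   factor 1/8 makes b |-> y_b injective, and Schroeder-Bernstein gives the
   cardinality of the continuum. *)

From Stdlib Require Import Reals.
From Stdlib Require Import Lra Lia ZArith ClassicalEpsilon Classical Cantor.
From Coquelicot Require Import Coquelicot.
Open Scope R_scope.

Definition is_integer (t : R) : Prop := exists k : Z, t = IZR k.

Lemma Int_part_add_IZR t m : Int_part (t + IZR m) = (Int_part t + m)%Z.
Proof.
  unfold Int_part.
  destruct (archimed t) as [H1 H2].
  assert (E : (up t + m)%Z = up (t + IZR m)).
  { apply tech_up; rewrite plus_IZR; lra. }
  rewrite <- E. lia.
Qed.

Lemma dist_Z_add_IZR t m : dist_Z (t + IZR m) = dist_Z t.
Proof.
  unfold dist_Z. rewrite Int_part_add_IZR, plus_IZR.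
  f_equal; ring.
Qed.

Lemma dist_Z_add_integer t s : is_integer s -> dist_Z (t + s) = dist_Z t.
Proof. intros [k ->]. apply dist_Z_add_IZR. Qed.

Lemma dist_Z_ge0 t : 0 <= dist_Z t.
Proof.
  unfold dist_Z. destruct (base_Int_part t).
  unfold Rmin; destruct Rle_dec; lra.
Qed.

Lemma dist_Z_le_Rabs t k : dist_Z t <= Rabs (t - IZR k).
Proof.
  unfold dist_Z. destruct (base_Int_part t) as [H1 H2].
  destruct (Z_le_gt_dec k (Int_part t)) as [Hk|Hk].
  - apply IZR_le in Hk.
    rewrite Rabs_pos_eq by lra.
    apply Rle_trans with (t - IZR (Int_part t)); [apply Rmin_l|lra].
  - assert (Hk' : (Int_part t + 1 <= k)%Z) by lia.
    apply IZR_le in Hk'. rewrite plus_IZR in Hk'.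
    rewrite Rabs_left by lra.
    apply Rle_trans with (IZR (Int_part t) + 1 - t); [apply Rmin_r|lra].
Qed.

Lemma dist_Z_attained t : exists k, Rabs (t - IZR k) = dist_Z t.
Proof.
  unfold dist_Z. destruct (base_Int_part t) as [H1 H2].
  unfold Rmin; destruct Rle_dec.
  - exists (Int_part t). rewrite Rabs_pos_eq; lra.
  - exists (Int_part t + 1)%Z. rewrite plus_IZR, Rabs_left; lra.
Qed.

Lemma dist_Z_sub_le u v : dist_Z (u - v) <= dist_Z u + dist_Z v.
Proof.
  destruct (dist_Z_attained u) as [ku <-].
  destruct (dist_Z_attained v) as [kv <-].
  apply Rle_trans with (Rabs (u - v - IZR (ku - kv))); [apply dist_Z_le_Rabs|].
  replace (u - v - IZR (ku - kv)) with ((u - IZR ku) + - (v - IZR kv))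
    by (rewrite minus_IZR; ring).
  rewrite <- (Rabs_Ropp (v - IZR kv)). apply Rabs_triang.
Qed.

Lemma dist_Z_integer_add t s : is_integer t -> dist_Z (t + s) <= Rabs s.
Proof.
  intros [k ->].
  apply Rle_trans with (Rabs (IZR k + s - IZR k)); [apply dist_Z_le_Rabs|].
  right; f_equal; ring.
Qed.

Lemma dist_Z_integer t : is_integer t -> dist_Z t = 0.
Proof.
  intro Ht. apply Rle_antisym; [|apply dist_Z_ge0].
  pose proof (dist_Z_integer_add t 0 Ht) as H0.
  now rewrite Rplus_0_r, Rabs_R0 in H0.
Qed.

Lemma dist_Z_gt0 t : ~ is_integer t -> 0 < dist_Z t.
Proof.
  intro Ht. destruct (dist_Z_ge0 t) as [|Hz]; [assumption|].
  destruct (dist_Z_attained t) as [k Hk]. rewrite <- Hz in Hk.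
  exfalso. apply Ht. exists k.
  revert Hk. unfold Rabs; destruct Rcase_abs; lra.
Qed.

Section PartialSums.
Variable psi : nat -> R.

Lemma psum_le : (forall n, (1 <= n)%nat -> 0 <= psi n) ->
  forall m n, (m <= n)%nat -> psum psi m <= psum psi n.
Proof.
  intros Hpsi m n Hmn. induction Hmn as [|n _ IH]; [lra|].
  simpl. assert (0 <= psi (S n)) by (apply Hpsi; lia). lra.
Qed.

Lemma psum_ge0 : (forall n, (1 <= n)%nat -> 0 <= psi n) -> forall n, 0 <= psum psi n.
Proof. intros Hpsi n. apply (psum_le Hpsi 0 n). lia. Qed.

Hypothesis psi_antitone : forall m n, (1 <= m)%nat -> (m <= n)%nat -> psi n <= psi m.

Lemma psum_add_le a L : (1 <= a)%nat -> psum psi (a + L) <= psum psi a + INR L * psi a.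
Proof.
  intro Ha. induction L as [|L IH].
  - rewrite Nat.add_0_r. simpl. lra.
  - rewrite Nat.add_succ_r, S_INR. simpl psum.
    assert (psi (S (a + L)) <= psi a) by (apply psi_antitone; lia). lra.
Qed.

Lemma psum_add_ge a L : (1 <= a)%nat -> psum psi a + INR L * psi (a + L)%nat <= psum psi (a + L).
Proof.
  intro Ha. induction L as [|L IH].
  - rewrite Nat.add_0_r. simpl. lra.
  - rewrite Nat.add_succ_r, S_INR. simpl psum.
    assert (psi (S (a + L)) <= psi (a + L)%nat) by (apply psi_antitone; lia).
    assert (INR L * psi (S (a + L)) <= INR L * psi (a + L)%nat)
      by (apply Rmult_le_compat_l; [apply pos_INR|lra]).
    lra.
Qed.

(* A block (N, n] with n >= 2N contributes at least (n/2) psi n to the sum. *)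
Lemma psum_unbounded eps : (forall n, (1 <= n)%nat -> 0 <= psi n) -> 0 < eps ->
  (forall N, exists n, (N <= n)%nat /\ eps <= INR n * psi n) ->
  forall M, exists N, psum psi N > M.
Proof.
  intros Hpsi Heps Hfreq.
  assert (Hstep : forall N, exists N', psum psi N + eps / 2 <= psum psi N').
  { intro N. destruct (Hfreq (2 * S N)%nat) as [n [Hn Hlarge]].
    exists n.
    pose proof (psum_add_ge (S N) (n - S N) ltac:(lia)) as Hblock.
    replace (S N + (n - S N))%nat with n in Hblock by lia.
    assert (Hhalf : INR n <= INR (2 * (n - S N))) by (apply le_INR; lia).
    rewrite mult_INR in Hhalf. simpl (INR 2) in Hhalf.
    assert (0 <= psi n) by (apply Hpsi; lia).
    assert (psum psi N <= psum psi (S N)) by (apply psum_le; [exact Hpsi|lia]).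
    nra. }
  assert (Hk : forall k, exists N, INR k * (eps / 2) <= psum psi N).
  { induction k as [|k [N HN]].
    - exists O. rewrite Rmult_0_l. apply psum_ge0, Hpsi.
    - destruct (Hstep N) as [N' HN']. exists N'. rewrite S_INR. lra. }
  intro M. destruct (INR_archimed (eps / 2) M ltac:(lra)) as [k Hk'].
  destruct (Hk k) as [N HN]. exists N. lra.
Qed.

End PartialSums.

Lemma in_D_pos psi : in_D psi -> forall n, (1 <= n)%nat -> 0 < psi n.
Proof.
  intros [Hpsi [Hanti Hdiv]] n Hn.
  destruct (Hpsi n Hn) as [|Hz]; [assumption|exfalso].
  destruct (Hdiv (psum psi n)) as [N HN].
  pose proof (psum_add_le psi Hanti n N Hn) as Hflat. rewrite <- Hz in Hflat.
  assert (psum psi N <= psum psi (n + N)) by (apply psum_le; [exact Hpsi|lia]).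
  lra.
Qed.

Fixpoint runmin (a : nat -> R) (j : nat) : R :=
  match j with O => a O | S j => Rmin (runmin a j) (a (S j)) end.

Lemma runmin_antitone a i j : (i <= j)%nat -> runmin a j <= runmin a i.
Proof.
  intro Hij. induction Hij as [|j _ IH]; simpl; [lra|].
  pose proof (Rmin_l (runmin a j) (a (S j))). lra.
Qed.

Lemma runmin_le a i j : (i <= j)%nat -> runmin a j <= a i.
Proof.
  intro Hij. apply Rle_trans with (runmin a i); [now apply runmin_antitone|].
  destruct i; simpl; [lra|apply Rmin_r].
Qed.

Lemma runmin_attained a j : exists i, (i <= j)%nat /\ runmin a j = a i.
Proof.
  induction j as [|j [i [Hi E]]].
  - now exists O.
  - simpl. unfold Rmin; destruct Rle_dec.
    + exists i; split; [lia|exact E].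
    + exists (S j); split; auto.
Qed.

Lemma runmin_gt0 a : (forall i, 0 < a i) -> forall j, 0 < runmin a j.
Proof. intros Hpos j. destruct (runmin_attained a j) as [i [_ ->]]. apply Hpos. Qed.

(* The witness is [psi n := runmin a (n - n0)]: non-increasing, below
   [||n x + y||] for [n >= n0], and of divergent sum by [psum_unbounded]. *)
Lemma not_Pi_of_runmin x y a n0 eps : (1 <= n0)%nat -> 0 < eps ->
  (forall i, 0 < a i) ->
  (forall i, a i <= dist_Z (INR (n0 + i) * x + y)) ->
  (forall N, exists j, (N <= j)%nat /\ eps <= INR j * runmin a j) ->
  ~ Pi x y.
Proof.
  intros Hn0 Heps Hpos Hle Hfreq HPi.
  set (psi n := runmin a (n - n0)).
  assert (Hpsi : forall n, (1 <= n)%nat -> 0 <= psi n).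
  { intros n _. left. now apply runmin_gt0. }
  assert (Hanti : forall m n, (1 <= m)%nat -> (m <= n)%nat -> psi n <= psi m).
  { intros m n _ Hmn. apply runmin_antitone. lia. }
  assert (HD : in_D psi).
  { split; [exact Hpsi|split; [exact Hanti|]].
    apply (psum_unbounded psi Hanti eps Hpsi Heps).
    intro N. destruct (Hfreq N) as [j [Hj Hlarge]].
    exists (n0 + j)%nat. split; [lia|].
    unfold psi. replace (n0 + j - n0)%nat with j by lia.
    assert (INR j <= INR (n0 + j)) by (apply le_INR; lia).
    pose proof (runmin_gt0 a Hpos j). nra. }
  destruct (HPi psi HD n0) as [n [Hn [_ Hlt]]].
  assert (psi n <= a (n - n0)%nat) by (apply runmin_le; lia).
  specialize (Hle (n - n0)%nat). replace (n0 + (n - n0))%nat with n in Hle by lia.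
  lra.
Qed.

(** * Badly approximable x *)

Section RunminOfSeparatedSequence.
Variables (a : nat -> R) (c : R).
Hypothesis a_pos : forall i, 0 < a i.
Hypothesis a_separated : forall u v, (u < v)%nat -> c <= INR (v - u) * (a u + a v).

Lemma runmin_drop j : runmin a (2 * j) < runmin a j -> c <= 4 * INR j * runmin a j.
Proof.
  intro Hdrop.
  destruct (runmin_attained a (2 * j)) as [k [Hk Ek]].
  destruct (runmin_attained a j) as [m [Hm Em]].
  assert (Hjk : (j < k)%nat).
  { destruct (le_lt_dec k j) as [Hkj|]; [|assumption].
    pose proof (runmin_le a k j Hkj). lra. }
  pose proof (a_separated m k ltac:(lia)) as Hsep.
  assert (Hgap : INR (k - m) <= INR (2 * j)) by (apply le_INR; lia).
  rewrite mult_INR in Hgap. simpl (INR 2) in Hgap.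
  pose proof (pos_INR (k - m)). pose proof (a_pos k).
  rewrite Ek in Hdrop. rewrite Em in Hdrop |- *. nra.
Qed.

(* If [j * runmin a j] stayed below [c/4], the running minimum could never
   drop between [j] and [2j], hence would be constant along [2^k J]. *)
Lemma runmin_frequently_large N : exists j, (N <= j)%nat /\ c / 4 <= INR j * runmin a j.
Proof.
  apply NNPP. intro Hno.
  assert (Hsmall : forall j, (N <= j)%nat -> INR j * runmin a j < c / 4).
  { intros j Hj. apply Rnot_le_lt. intro. apply Hno. now exists j. }
  set (J := S N).
  assert (Hconst : forall k, runmin a (2 ^ k * J) = runmin a J).
  { induction k as [|k IH]; [now rewrite Nat.mul_1_l|].
    rewrite <- IH, Nat.pow_succ_r', <- Nat.mul_assoc.
    apply Rle_antisym; [apply runmin_antitone; lia|].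
    apply Rnot_lt_le. intro Hdrop. apply runmin_drop in Hdrop.
    assert (HN : (N <= 2 ^ k * J)%nat) by (pose proof (Nat.pow_nonzero 2 k); unfold J; nia).
    specialize (Hsmall _ HN). lra. }
  pose proof (runmin_gt0 a a_pos J) as HJ.
  destruct (INR_archimed (runmin a J) (c / 4) HJ) as [k Hk].
  assert (Hk2 : (k <= 2 ^ k * J)%nat).
  { pose proof (Nat.pow_gt_lin_r 2 k ltac:(lia)). unfold J. nia. }
  assert (HN : (N <= 2 ^ k * J)%nat) by (pose proof (Nat.pow_nonzero 2 k); unfold J; nia).
  specialize (Hsmall _ HN). rewrite Hconst in Hsmall.
  apply le_INR in Hk2. nra.
Qed.

End RunminOfSeparatedSequence.

Lemma Bad_separated x y c : (forall n, (1 <= n)%nat -> INR n * dist_Z (INR n * x) >= c) ->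
  forall u v, (u < v)%nat ->
  c <= INR (v - u) * (dist_Z (INR u * x + y) + dist_Z (INR v * x + y)).
Proof.
  intros Hc u v Huv.
  pose proof (dist_Z_sub_le (INR v * x + y) (INR u * x + y)) as Htri.
  replace (INR v * x + y - (INR u * x + y)) with (INR (v - u) * x) in Htri
    by (rewrite minus_INR by lia; ring).
  specialize (Hc (v - u)%nat ltac:(lia)).
  pose proof (pos_INR (v - u)). nra.
Qed.

Lemma Bad_eventually_not_integer x y : Bad x ->
  exists n0, (1 <= n0)%nat /\ forall n, (n0 <= n)%nat -> ~ is_integer (INR n * x + y).
Proof.
  intros [c [Hc Hbad]].
  destruct (classic (exists k, (1 <= k)%nat /\ is_integer (INR k * x + y)))
    as [[k [Hk Hint]]|Hnone].
  - exists (S k). split; [lia|]. intros n Hn Hint'.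
    pose proof (Bad_separated x y c Hbad k n ltac:(lia)) as Hsep.
    rewrite !dist_Z_integer in Hsep by assumption. lra.
  - exists 1%nat. split; [lia|]. intros n Hn Hint. apply Hnone. now exists n.
Qed.

Theorem Bad_Phi_empty x : Bad x -> is_empty (Phi x).
Proof.
  intros Hbad y HPi.
  destruct (Bad_eventually_not_integer x y Hbad) as [n0 [Hn0 Hnot]].
  destruct Hbad as [c [Hc Hbad]].
  set (a i := dist_Z (INR (n0 + i) * x + y)).
  assert (Hpos : forall i, 0 < a i) by (intro i; apply dist_Z_gt0, Hnot; lia).
  apply (not_Pi_of_runmin x y a n0 (c / 4) Hn0 ltac:(lra) Hpos (fun i => Rle_refl _));
    [|exact HPi].
  apply (runmin_frequently_large a c Hpos).
  intros u v Huv. unfold a.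
  pose proof (Bad_separated x y c Hbad (n0 + u) (n0 + v) ltac:(lia)) as Hsep.
  now replace (n0 + v - (n0 + u))%nat with (v - u)%nat in Hsep by lia.
Qed.

(** * Rational x *)

Lemma Pi_of_integer_hit x y (Q n : nat) : (1 <= Q)%nat -> is_integer (INR Q * x) ->
  (1 <= n)%nat -> is_integer (INR n * x + y) -> Pi x y.
Proof.
  intros HQ [kQ HkQ] Hn [k Hk] psi HD N.
  exists (n + S N * Q)%nat. split; [nia|split; [lia|]].
  replace (INR (n + S N * Q) * x + y) with (IZR (k + Z.of_nat (S N) * kQ))
    by (rewrite plus_IZR, mult_IZR, <- INR_IZR_INZ, plus_INR, mult_INR, <- HkQ, <- Hk;
        ring).
  rewrite dist_Z_integer by now eexists.
  apply in_D_pos; [exact HD|lia].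
Qed.

(* When [Q x] is an integer, the distances [||n x + y||] are [Q]-periodic in
   [n]; if none vanishes they are bounded below, so a constant minorant
   already has divergent sum. *)
Lemma integer_hit_of_Pi x y (Q : nat) : (1 <= Q)%nat -> is_integer (INR Q * x) ->
  Pi x y -> exists n, (1 <= n)%nat /\ is_integer (INR n * x + y).
Proof.
  intros HQ HQx HPi. apply NNPP. intro Hnone.
  set (a i := dist_Z (INR (1 + i) * x + y)).
  assert (Hpos : forall i, 0 < a i).
  { intro i. apply dist_Z_gt0. intro Hint. apply Hnone. exists (1 + i)%nat. now split; [lia|]. }
  assert (Hper : forall i, a (i + Q)%nat = a i).
  { intro i. unfold a.
    replace (INR (1 + (i + Q)) * x + y) with (INR (1 + i) * x + y + INR Q * x)
      by (rewrite !plus_INR; ring).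
    now apply dist_Z_add_integer. }
  set (c := runmin a (Q - 1)).
  assert (Hc : 0 < c) by now apply runmin_gt0.
  assert (Hlow : forall i, c <= a i).
  { intro i. induction i as [i IH] using (well_founded_induction lt_wf).
    destruct (le_lt_dec Q i) as [HQi|HiQ].
    - replace i with (i - Q + Q)%nat by lia. rewrite Hper. apply IH. lia.
    - apply runmin_le. lia. }
  apply (not_Pi_of_runmin x y a 1 c (le_n 1) Hc Hpos (fun i => Rle_refl _)); [|exact HPi].
  intro N. exists (S N). split; [lia|].
  destruct (runmin_attained a (S N)) as [i [_ ->]].
  rewrite S_INR. pose proof (pos_INR N). pose proof (Hlow i). nra.
Qed.

Lemma rational_pos_den x : rational x -> exists p q, (0 < q)%Z /\ x = IZR p / IZR q.
Proof.
  intros [p [q [Hq ->]]].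
  destruct (Z_lt_le_dec 0 q) as [Hpos|Hneg].
  - now exists p, q.
  - exists (- p)%Z, (- q)%Z. split; [lia|].
    rewrite !opp_IZR. field. apply not_0_IZR. exact Hq.
Qed.

Definition nat_to_Z (n : nat) : Z :=
  if Nat.even n then Z.of_nat (Nat.div2 n) else (- Z.of_nat (Nat.div2 n) - 1)%Z.

Lemma nat_even_div2 n : (Nat.even n = true /\ n = (2 * Nat.div2 n)%nat) \/
                        (Nat.even n = false /\ n = (2 * Nat.div2 n + 1)%nat).
Proof.
  pose proof (Nat.div2_odd n) as Hn. rewrite <- Nat.negb_even in Hn.
  destruct (Nat.even n); simpl in Hn; [left|right]; split; auto; lia.
Qed.

Lemma nat_to_Z_inj m n : nat_to_Z m = nat_to_Z n -> m = n.
Proof.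
  unfold nat_to_Z.
  destruct (nat_even_div2 m) as [[-> Hm]|[-> Hm]];
    destruct (nat_even_div2 n) as [[-> Hn]|[-> Hn]]; lia.
Qed.

Lemma nat_to_Z_surj z : exists n, nat_to_Z n = z.
Proof.
  destruct (Z_le_gt_dec 0 z).
  - exists (2 * Z.to_nat z)%nat. unfold nat_to_Z.
    destruct (nat_even_div2 (2 * Z.to_nat z)) as [[-> Hn]|[-> Hn]]; lia.
  - exists (2 * Z.to_nat (- z - 1) + 1)%nat. unfold nat_to_Z.
    destruct (nat_even_div2 (2 * Z.to_nat (- z - 1) + 1)) as [[-> Hn]|[-> Hn]]; lia.
Qed.

Section RationalPhi.
Variables p q : Z.
Hypothesis q_pos : (0 < q)%Z.

Let IZR_q_neq0 : IZR q <> 0.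
Proof. apply not_0_IZR. lia. Qed.

(* One direction is divisibility by [gcd p q], the other is Bezout. *)
Lemma integer_hit_rational_iff y :
  (exists n, (1 <= n)%nat /\ is_integer (INR n * (IZR p / IZR q) + y)) <->
  exists z, y = IZR z * IZR (Z.gcd p q) / IZR q.
Proof.
  split.
  - intros [n [_ [k Hk]]].
    assert (Hdiv : (Z.gcd p q | k * q - Z.of_nat n * p)%Z).
    { apply Z.divide_sub_r; apply Z.divide_mul_r;
        [apply Z.gcd_divide_r|apply Z.gcd_divide_l]. }
    destruct Hdiv as [z Hz]. exists z.
    rewrite <- mult_IZR, <- Hz, minus_IZR, !mult_IZR, <- INR_IZR_INZ, <- Hk.
    field. exact IZR_q_neq0.
  - intros [z ->].
    destruct (Z.gcd_bezout p q _ eq_refl) as [u [v Huv]].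
    set (m := (Z.abs (z * u) + 1)%Z).
    exists (Z.to_nat (q * m - z * u)). split; [nia|].
    exists (m * p + z * v)%Z.
    rewrite INR_IZR_INZ, Z2Nat.id by nia. rewrite <- Huv.
    rewrite minus_IZR, plus_IZR, !mult_IZR, plus_IZR, !mult_IZR.
    field. exact IZR_q_neq0.
Qed.

Lemma Phi_rational y : Phi (IZR p / IZR q) y <-> exists z, y = IZR z * IZR (Z.gcd p q) / IZR q.
Proof.
  set (Q := Z.to_nat q).
  assert (HQ : (1 <= Q)%nat) by lia.
  assert (HQx : is_integer (INR Q * (IZR p / IZR q))).
  { exists p. unfold Q. rewrite INR_IZR_INZ, Z2Nat.id by lia. field. exact IZR_q_neq0. }
  rewrite <- integer_hit_rational_iff. split.
  - now apply integer_hit_of_Pi with Q.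
  - intros [n [Hn Hint]]. now apply Pi_of_integer_hit with Q n.
Qed.

Lemma Phi_rational_countable : countably_infinite (Phi (IZR p / IZR q)).
Proof.
  assert (Hg : IZR (Z.gcd p q) <> 0).
  { apply not_0_IZR. intro Hg. apply Z.gcd_eq_0_r in Hg. lia. }
  exists (fun n => IZR (nat_to_Z n) * IZR (Z.gcd p q) / IZR q). split.
  - intros m n E. apply nat_to_Z_inj, eq_IZR.
    apply (Rmult_eq_reg_r (IZR (Z.gcd p q) / IZR q)).
    + unfold Rdiv in *. rewrite <- !Rmult_assoc. exact E.
    + apply Rmult_integral_contrapositive_currified; [exact Hg|].
      apply Rinv_neq_0_compat, IZR_q_neq0.
  - intro y. rewrite Phi_rational. split.
    + intros [z ->]. destruct (nat_to_Z_surj z) as [n <-]. now exists n.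
    + intros [n <-]. now exists (nat_to_Z n).
Qed.

End RationalPhi.

Theorem rational_Phi_countable x : rational x -> countably_infinite (Phi x).
Proof.
  intro Hx. destruct (rational_pos_den x Hx) as [p [q [Hq ->]]].
  now apply Phi_rational_countable.
Qed.

(** * Well approximable irrational x *)

Lemma irrational_not_integer_mul x n : ~ rational x -> (1 <= n)%nat -> ~ is_integer (INR n * x).
Proof.
  intros Hirr Hn [k Hk]. apply Hirr. exists k, (Z.of_nat n). split; [lia|].
  rewrite <- INR_IZR_INZ, <- Hk. field. apply not_0_INR. lia.
Qed.

Section WellApproximable.
Variable x : R.
Hypothesis x_WA : WA x.
Hypothesis x_irrational : ~ rational x.

Lemma WA_small_multiple c : 0 < c -> exists n, (1 <= n)%nat /\ INR n * dist_Z (INR n * x) < c.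
Proof.
  intro Hc. apply NNPP. intro Hnone. apply x_WA. exists c. split; [lra|].
  intros n Hn. apply Rnot_lt_ge. intro Hlt. apply Hnone. now exists n.
Qed.

Definition small_multiple (c : R) : nat :=
  epsilon (inhabits 1%nat) (fun n => (1 <= n)%nat /\ INR n * dist_Z (INR n * x) < c).

Lemma small_multiple_spec c : 0 < c ->
  (1 <= small_multiple c)%nat /\ INR (small_multiple c) * dist_Z (INR (small_multiple c) * x) < c.
Proof. intro Hc. unfold small_multiple. apply epsilon_spec, WA_small_multiple, Hc. Qed.

Fixpoint qn (j : nat) : nat :=
  match j with
  | O => small_multiple 1
  | S j => small_multiple (Rmin ((/2) ^ S j) (dist_Z (INR (qn j) * x) / 8))
  end.

Definition dn (j : nat) : R := dist_Z (INR (qn j) * x).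

Lemma qn_ge1 j : (1 <= qn j)%nat.
Proof.
  induction j as [|j IH]; simpl qn; apply small_multiple_spec; [lra|].
  apply Rmin_glb_lt; [apply (pow_lt (/2) (S j)); lra|].
  pose proof (dist_Z_gt0 _ (irrational_not_integer_mul x (qn j) x_irrational IH)). lra.
Qed.

Lemma dn_gt0 j : 0 < dn j.
Proof. apply dist_Z_gt0, irrational_not_integer_mul, qn_ge1. exact x_irrational. Qed.

Lemma qn_succ_spec j :
  INR (qn (S j)) * dn (S j) < Rmin ((/2) ^ S j) (dn j / 8).
Proof.
  apply small_multiple_spec. apply Rmin_glb_lt; [apply pow_lt; lra|].
  pose proof (dn_gt0 j). lra.
Qed.

Lemma qn_dn_lt j : INR (qn j) * dn j < (/2) ^ j.
Proof.
  destruct j as [|j].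
  - simpl. apply small_multiple_spec. lra.
  - eapply Rlt_le_trans; [apply qn_succ_spec|apply Rmin_l].
Qed.

Lemma dn_succ_le j : dn (S j) <= dn j / 8.
Proof.
  pose proof (qn_succ_spec j) as Hspec. pose proof (Rmin_r ((/2) ^ S j) (dn j / 8)).
  assert (1 <= INR (qn (S j))) by (apply (le_INR 1), qn_ge1).
  pose proof (dn_gt0 (S j)). nra.
Qed.

Lemma dn_geometric j k : dn (j + k) <= dn j * (/8) ^ k.
Proof.
  induction k as [|k IH].
  - rewrite Nat.add_0_r. simpl. lra.
  - rewrite Nat.add_succ_r. pose proof (dn_succ_le (j + k)). simpl pow. lra.
Qed.

Definition pn (j : nat) : Z :=
  epsilon (inhabits 0%Z) (fun k => Rabs (INR (qn j) * x - IZR k) = dn j).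

Definition delta (j : nat) : R := INR (qn j) * x - IZR (pn j).

Lemma Rabs_delta j : Rabs (delta j) = dn j.
Proof. unfold delta, pn. apply epsilon_spec, dist_Z_attained. Qed.

Definition digit (b : nat -> bool) (i : nat) : nat := if b i then 2%nat else 1%nat.

Lemma digit_bounds b i : (1 <= digit b i <= 2)%nat.
Proof. unfold digit. destruct (b i); lia. Qed.

Definition term (b : nat -> bool) (j k : nat) : R := INR (digit b (j + k)) * delta (j + k).

Lemma Rabs_term_le b j k : Rabs (term b j k) <= 2 * dn j * (/8) ^ k.
Proof.
  unfold term. rewrite Rabs_mult, Rabs_delta, Rabs_pos_eq by apply pos_INR.
  pose proof (digit_bounds b (j + k)) as [_ H2]. apply le_INR in H2.
  pose proof (dn_geometric j k). pose proof (dn_gt0 (j + k)). simpl (INR 2) in H2.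
  nra.
Qed.

Lemma ex_series_geometric_bound j : ex_series (fun k => 2 * dn j * (/8) ^ k).
Proof.
  apply (ex_series_scal_l (2 * dn j) (fun k => (/8) ^ k)).
  apply ex_series_geom. rewrite Rabs_pos_eq; lra.
Qed.

Lemma ex_series_term b j : ex_series (term b j).
Proof.
  apply (ex_series_le (term b j) _ (Rabs_term_le b j)), ex_series_geometric_bound.
Qed.

Definition tail (b : nat -> bool) (j : nat) : R := Series (term b j).

Lemma tail_succ b j : tail b j = INR (digit b j) * delta j + tail b (S j).
Proof.
  unfold tail. rewrite Series_incr_1 by apply ex_series_term. f_equal.
  - unfold term. now rewrite Nat.add_0_r.
  - apply Series_ext. intro k. unfold term. now rewrite Nat.add_succ_r.
Qed.

Lemma Rabs_tail_le b j : Rabs (tail b j) <= 3 * dn j.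
Proof.
  unfold tail.
  assert (Habs : ex_series (fun k => Rabs (term b j k))).
  { apply (ex_series_le (fun k => Rabs (term b j k)) (fun k => 2 * dn j * (/8) ^ k));
      [|apply ex_series_geometric_bound].
    intro k. change (norm (Rabs (term b j k))) with (Rabs (Rabs (term b j k))).
    rewrite Rabs_Rabsolu. apply Rabs_term_le. }
  eapply Rle_trans; [apply Series_Rabs, Habs|].
  eapply Rle_trans; [apply (Series_le _ (fun k => 2 * dn j * (/8) ^ k))|].
  - intro k. split; [apply Rabs_pos|apply Rabs_term_le].
  - apply ex_series_geometric_bound.
  - rewrite Series_scal_l, Series_geom by (rewrite Rabs_pos_eq; lra).
    pose proof (dn_gt0 j). lra.
Qed.

Definition yb (b : nat -> bool) : R := - tail b 0.

Fixpoint mseq (b : nat -> bool) (j : nat) : nat :=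
  match j with
  | O => (digit b 0 * qn 0)%nat
  | S j => (mseq b j + digit b (S j) * qn (S j))%nat
  end.

Lemma mseq_ge b j : (S j <= mseq b j)%nat.
Proof.
  induction j as [|j IH]; cbn [mseq].
  - pose proof (digit_bounds b 0). pose proof (qn_ge1 0). nia.
  - pose proof (digit_bounds b (S j)). pose proof (qn_ge1 (S j)). nia.
Qed.

Lemma mseq_integer b j : is_integer (INR (mseq b j) * x + yb b + tail b (S j)).
Proof.
  induction j as [|j [k Hk]].
  - exists (Z.of_nat (digit b 0) * pn 0)%Z. unfold yb. rewrite (tail_succ b 0).
    cbn [mseq]. rewrite mult_IZR, mult_INR, <- INR_IZR_INZ. unfold delta. ring.
  - exists (k + Z.of_nat (digit b (S j)) * pn (S j))%Z.
    rewrite (tail_succ b (S j)) in Hk. cbn [mseq].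
    rewrite plus_IZR, mult_IZR, <- INR_IZR_INZ, <- Hk, plus_INR, mult_INR.
    unfold delta. ring.
Qed.

Lemma dist_mseq_le b j : dist_Z (INR (mseq b j) * x + yb b) <= 3 * dn (S j).
Proof.
  replace (INR (mseq b j) * x + yb b)
    with ((INR (mseq b j) * x + yb b + tail b (S j)) + - tail b (S j)) by ring.
  eapply Rle_trans; [apply dist_Z_integer_add, mseq_integer|].
  rewrite Rabs_Ropp. apply Rabs_tail_le.
Qed.

(* If [psi] beats the distances from some point on, its mass on each block
   [(m_j, m_(j+1)]] is at most [2 q_(j+1) * 3 ||q_(j+1) x|| < 6 / 2^(j+1)]. *)
Lemma psum_mseq_succ_le psi b j : in_D psi -> psi (mseq b j) <= 3 * dn (S j) ->
  psum psi (mseq b (S j)) <= psum psi (mseq b j) + 6 * (/2) ^ S j.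
Proof.
  intros [Hpsi [Hanti _]] Hm. cbn [mseq].
  pose proof (mseq_ge b j).
  eapply Rle_trans; [apply psum_add_le; [exact Hanti|lia]|].
  pose proof (qn_dn_lt (S j)). pose proof (Hpsi (mseq b j) ltac:(lia)).
  pose proof (digit_bounds b (S j)) as [_ H2]. apply le_INR in H2. simpl (INR 2) in H2.
  pose proof (pos_INR (qn (S j))). pose proof (pos_INR (digit b (S j))).
  rewrite mult_INR.
  assert (INR (digit b (S j)) * INR (qn (S j)) * psi (mseq b j)
          <= 2 * INR (qn (S j)) * (3 * dn (S j))) by (apply Rmult_le_compat; nra).
  lra.
Qed.

Lemma yb_Phi b : Phi x (yb b).
Proof.
  intros psi HD N. apply NNPP. intro Hnone.
  assert (Hbeaten : forall j, (N <= j)%nat -> psi (mseq b j) <= 3 * dn (S j)).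
  { intros j Hj. eapply Rle_trans; [|apply dist_mseq_le].
    apply Rnot_lt_le. intro Hlt. apply Hnone. exists (mseq b j).
    pose proof (mseq_ge b j). repeat split; [lia|lia|exact Hlt]. }
  assert (Hbounded : forall k, psum psi (mseq b (N + k)) + 6 * (/2) ^ (N + k)
                               <= psum psi (mseq b N) + 6 * (/2) ^ N).
  { induction k as [|k IH]; [rewrite Nat.add_0_r; lra|].
    rewrite Nat.add_succ_r.
    pose proof (psum_mseq_succ_le psi b (N + k) HD (Hbeaten (N + k)%nat ltac:(lia))).
    simpl pow in *. lra. }
  destruct HD as [Hpsi [_ Hdiv]].
  destruct (Hdiv (psum psi (mseq b N) + 6 * (/2) ^ N)) as [M HM].
  assert (psum psi M <= psum psi (mseq b (N + M))).
  { apply psum_le; [exact Hpsi|]. pose proof (mseq_ge b (N + M)). lia. }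
  pose proof (Hbounded M). pose proof (pow_le (/2) (N + M) ltac:(lra)).
  lra.
Qed.

(* Since [||q_(j+1) x|| <= ||q_j x|| / 8], the tail after [j] is too short
   to compensate a change of the digit [b_j]. *)
Lemma tail_eq_digit b b' j : tail b j = tail b' j -> b j = b' j /\ tail b (S j) = tail b' (S j).
Proof.
  rewrite (tail_succ b j), (tail_succ b' j). intro E.
  pose proof (Rabs_tail_le b (S j)) as B. pose proof (Rabs_tail_le b' (S j)) as B'.
  apply Rabs_le_between in B. apply Rabs_le_between in B'.
  pose proof (dn_succ_le j). pose proof (dn_gt0 j). pose proof (Rabs_delta j) as Hd.
  revert Hd E. unfold digit, Rabs. destruct Rcase_abs; destruct (b j), (b' j); simpl;
    intros; split; auto; lra.
Qed.

Lemma yb_inj b b' : yb b = yb b' -> forall j, b j = b' j.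
Proof.
  intro E.
  assert (Htail : forall j, tail b j = tail b' j).
  { induction j as [|j IH]; [unfold yb in E; lra|]. now apply tail_eq_digit. }
  intro j. now apply tail_eq_digit.
Qed.

End WellApproximable.


(** * Cardinality *)

Definition rat_enum (i : nat) : R :=
  let (u, w) := Cantor.of_nat i in IZR (nat_to_Z u) / INR (S w).

Lemma rat_enum_dense a a' : a < a' -> exists i, a < rat_enum i < a'.
Proof.
  intro Haa'.
  destruct (INR_archimed (a' - a) 1 ltac:(lra)) as [w Hw].
  destruct (nat_to_Z_surj (Int_part (a * INR (S w)) + 1)) as [u Hu].
  exists (Cantor.to_nat (u, w)). unfold rat_enum. rewrite Cantor.cancel_of_to, Hu.
  rewrite plus_IZR, S_INR in *.
  destruct (base_Int_part (a * (INR w + 1))) as [B1 B2].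
  pose proof (pos_INR w).
  split; apply (Rmult_lt_reg_r (INR w + 1)); try lra;
    unfold Rdiv; rewrite Rmult_assoc, Rinv_l by lra; nra.
Qed.

Definition real_code (a : R) (i : nat) : bool := if Rlt_dec (rat_enum i) a then true else false.

Lemma real_code_inj a a' : (forall i, real_code a i = real_code a' i) -> a = a'.
Proof.
  intro E.
  destruct (Rtotal_order a a') as [Hlt|[Heq|Hgt]]; [exfalso|exact Heq|exfalso].
  - destruct (rat_enum_dense a a' Hlt) as [i Hi]. specialize (E i). unfold real_code in E.
    destruct (Rlt_dec (rat_enum i) a), (Rlt_dec (rat_enum i) a'); try discriminate; lra.
  - destruct (rat_enum_dense a' a Hgt) as [i Hi]. specialize (E i). unfold real_code in E.
    destruct (Rlt_dec (rat_enum i) a), (Rlt_dec (rat_enum i) a'); try discriminate; lra.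
Qed.

Section SchroederBernstein.
Variable A : R -> Prop.
Variable F : R -> R.
Hypothesis F_inj : forall a b, F a = F b -> a = b.
Hypothesis F_in_A : forall a, A (F a).

Fixpoint iterF (k : nat) (a : R) : R := match k with O => a | S k => F (iterF k a) end.

Definition F_orbit_of_outside (a : R) : Prop := exists k a0, ~ A a0 /\ a = iterF k a0.

Definition SB_bij (a : R) : R :=
  if excluded_middle_informative (F_orbit_of_outside a) then F a else a.

Lemma card_continuum_of_injection : has_card_continuum A.
Proof.
  assert (Horbit_F : forall a, F_orbit_of_outside a -> F_orbit_of_outside (F a)).
  { intros a [k [a0 [Ha0 ->]]]. now exists (S k), a0. }
  exists SB_bij. split.
  - intros a b. unfold SB_bij.
    destruct (excluded_middle_informative (F_orbit_of_outside a)) as [Ca|Ca],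
      (excluded_middle_informative (F_orbit_of_outside b)) as [Cb|Cb]; intro E.
    + now apply F_inj.
    + exfalso. apply Cb. rewrite <- E. now apply Horbit_F.
    + exfalso. apply Ca. rewrite E. now apply Horbit_F.
    + exact E.
  - intro y. split.
    + intro Hy. destruct (classic (F_orbit_of_outside y)) as [[k [a0 [Ha0 Hk]]]|Cy].
      * destruct k as [|k]; [simpl in Hk; subst; contradiction|].
        exists (iterF k a0). unfold SB_bij.
        destruct (excluded_middle_informative (F_orbit_of_outside (iterF k a0))) as [C|C].
        -- now rewrite Hk.
        -- exfalso. apply C. now exists k, a0.
      * exists y. unfold SB_bij.
        now destruct (excluded_middle_informative (F_orbit_of_outside y)).
    + intros [a <-]. unfold SB_bij.
      destruct (excluded_middle_informative (F_orbit_of_outside a)) as [C|C]; [apply F_in_A|].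
      apply NNPP. intro Ha. apply C. now exists O, a.
Qed.

End SchroederBernstein.

Theorem WA_irrational_Phi_continuum x : WA x -> ~ rational x -> has_card_continuum (Phi x).
Proof.
  intros HWA Hirr.
  apply (card_continuum_of_injection (Phi x) (fun a => yb x (real_code a))).
  - intros a a' E. apply real_code_inj. exact (yb_inj x HWA Hirr _ _ E).
  - intro a. now apply yb_Phi.
Qed.

Theorem theorem19 : forall x : R,
  (rational x -> countably_infinite (Phi x)) /\
  (WA x -> ~ rational x -> has_card_continuum (Phi x)) /\
  (Bad x -> is_empty (Phi x)).
Proof.
  intro x. split; [|split].
  - apply rational_Phi_countable.
  - apply WA_irrational_Phi_continuum.
  - apply Bad_Phi_empty.
Qed.
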